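(* Let $M^{\circ}=\langle \mathcal{S},\mathcal{A},s_{\text{init}},H,T^{\circ},R^{\circ}\rangle$ be a deterministic episodic MDP (abstract simulator) and let $\eta\in[0,1]$ be a perturbation level. Then the abstract policy $\rho$ returned by the Robust Dynamic Programming procedure $\mathrm{RDP}(M^{\circ},\eta)$ is a robust abstract policy, i.e. \[ \min_{M\in\mathcal{P}(M^{\circ},\eta)} V^{\rho}_{M}=\max_{\psi\in\Psi}\ \min_{M\in\mathcal{P}(M^{\circ},\eta)} V^{\psi}_{M}, \] so that $\rho\in\arg\max_{\psi\in\Psi}\min_{M\in\mathcal{P}(M^{\circ},\eta)}V^{\psi}_{M}$.
   Context: An episodic MDP $M=\langle\mathcal{S},\mathcal{A},s_{\text{init}},H,T,R\rangle$ has finite state space $\mathcal{S}$, finite action space $\mathcal{A}$, fixed initial state $s_{\text{init}}$, horizon $H$, transitions $T_h(\cdot\mid s,a)\in\Delta(\mathcal{S})$ and rewards $R_h(s,a)\in[0,1]$ for $h\in[H]$. It is deterministic if $T_h(s'\mid s,a)\in\{0,1\}$ for all $h,s,a,s'$. An abstract policy is a map $\psi:[H]\times\mathcal{S}\to\mathcal{A}$; $\Psi$ is the set of all such maps; $V^{\psi}_M=\mathbb{E}_{M,\psi}[r_1+\dots+r_H]$ with $s_1=s_{\text{init}}$, $a_h=\psi_h(s_h)$, $r_h=R_h(s_h,a_h)$, $s_{h+1}\sim T_h(\cdot\mid s_h,a_h)$. $\eta$-perturbation: an MDP $M'=\langle\mathcal{S},\mathcal{A},s_{\text{init}},H,T',R'\rangle$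 is an $\eta$-perturbation of $M=\langle\mathcal{S},\mathcal{A},s_{\text{init}},H,T,R\rangle$ if there is $\xi:[H]\times\mathcal{S}\times\mathcal{A}\to\Delta(\mathcal{A})$ with $\xi_h(a\mid s,a)\ge 1-\eta$ for all $h,s,a$ such that $T'_h(s'\mid s,a)=\sum_{a'}T_h(s'\mid s,a')\xi_h(a'\mid s,a)$ and $R'_h(s,a)=\sum_{a'}R_h(s,a')\xi_h(a'\mid s,a)$ for all $h,s,a,s'$. $\mathcal{P}(M,\eta)$ denotes the set of all $\eta$-perturbations of $M$. $\mathrm{RDP}(M^{\circ},\eta)$: set $\tilde V_{H+1}(s)=0$ for all $s$; for $h=H,\dots,1$ set $\tilde Q_h(s,a)=R^{\circ}_h(s,a)+\sum_{s'}T^{\circ}_h(s'\mid s,a)\tilde V_{h+1}(s')$ for all $s,a$ and $\tilde V_h(s)=(1-\eta)\max_a\tilde Q_h(s,a)+\eta\min_a\tilde Q_h(s,a)$ for all $s$; return $\rho$ with $\rho_h(s)\in\arg\max_a\tilde Q_h(s,a)$. *)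

From HB Require Import structures.
From mathcomp Require Import all_boot all_order all_algebra.
Set Implicit Arguments. Unset Strict Implicit. Unset Printing Implicit Defensive.
Import Order.TTheory GRing.Theory Num.Theory.
Local Open Scope ring_scope.

(* Episodic MDP <S, A, s_init, H, T, R>.  Steps are 0-indexed: h = 0, ..., H-1
   corresponds to the paper's steps 1, ..., H.  T h s a s' = T_h(s' | s, a). *)
Record mdp (S A : finType) (R : realFieldType) := MDP {
  s_init : S;
  hor : nat;
  trans : nat -> S -> A -> S -> R;
  rew : nat -> S -> A -> R }.

Section Defs.
Variables (R : realFieldType) (S A : finType).

Definition is_dist (T : finType) (p : T -> R) :=
  (forall x, 0 <= p x) /\ \sum_(x : T) p x = 1.

Definition valid_mdp (M : mdp S A R) :=
  forall h, (h < hor M)%N -> forall s a,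
    is_dist (trans M h s a) /\ 0 <= rew M h s a <= 1.

Definition deterministic (M : mdp S A R) :=
  forall h, (h < hor M)%N -> forall s a s',
    trans M h s a s' = 0 \/ trans M h s a s' = 1.

Definition perturbation (M : mdp S A R) (eta : R) (M' : mdp S A R) :=
  s_init M' = s_init M /\ hor M' = hor M /\
  exists xi : nat -> S -> A -> A -> R,
    forall h, (h < hor M)%N -> forall s a,
      is_dist (xi h s a) /\ 1 - eta <= xi h s a a /\
      (forall s', trans M' h s a s' = \sum_(a' : A) trans M h s a' s' * xi h s a a') /\
      rew M' h s a = \sum_(a' : A) rew M h s a' * xi h s a a'.

Definition policy := nat -> S -> A.

(* expected total reward, by backward induction:
   vrec M psi n h s = expected reward collected in steps h, ..., h+n-1 from s *)
Fixpoint vrec (M : mdp S A R) (psi : policy) (n h : nat) (s : S) : R :=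
  match n with
  | 0 => 0
  | n'.+1 => rew M h s (psi h s)
             + \sum_(s' : S) trans M h s (psi h s) s' * vrec M psi n' h.+1 s'
  end.

Definition value (M : mdp S A R) (psi : policy) : R :=
  vrec M psi (hor M) 0 (s_init M).

(* max / min of f over the finite action set A (0 if A is empty) *)
Definition maxA (f : A -> R) : R :=
  if [pick a : A] is Some a0 then \big[Num.max/f a0]_(a : A) f a else 0.
Definition minA (f : A -> R) : R :=
  if [pick a : A] is Some a0 then \big[Num.min/f a0]_(a : A) f a else 0.

(* RDP: Vt n h s = tilde V at step h with n remaining steps *)
Fixpoint rdpV (M : mdp S A R) (eta : R) (n h : nat) (s : S) : R :=
  match n with
  | 0 => 0
  | n'.+1 =>
    let Q := fun a => rew M h s a
                      + \sum_(s' : S) trans M h s a s' * rdpV M eta n' h.+1 s' in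
    (1 - eta) * maxA Q + eta * minA Q
  end.

Definition rdpQ (M : mdp S A R) (eta : R) (h : nat) (s : S) (a : A) : R :=
  rew M h s a + \sum_(s' : S) trans M h s a s' * rdpV M eta (hor M - h.+1) h.+1 s'.

(* rho is a possible output of RDP(M, eta): rho_h(s) in argmax_a tilde Q_h(s,a) *)
Definition rdp_output (M : mdp S A R) (eta : R) (rho : policy) :=
  forall h, (h < hor M)%N -> forall s a, rdpQ M eta h s a <= rdpQ M eta h s (rho h s).

End Defs.

(* Against a fixed policy psi the adversary acts independently at each step and
   state, and among the eta-mixtures of actions the worst one keeps psi_h(s) with
   weight 1 - eta and puts the remaining eta on the action of least nominal
   Q-value.  Hence the worst-case value of psi is the backward recursion
     W_h(s) = (1 - eta) Q_h(s, psi_h(s)) + eta min_a Q_h(s, a),   Q computed from W_(h+1),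
   and it is attained by an explicit eta-perturbation.  By monotonicity W is below
   the RDP value V~, with equality for rho because rho_h(s) maximises Q~_h(s, .). *)

From Pilot Require Import Defs.
From mathcomp Require Import all_boot all_order all_algebra.
From mathcomp Require Import ring lra.
Set Implicit Arguments.
Unset Strict Implicit.
Unset Printing Implicit Defensive.

Import Order.TTheory GRing.Theory Num.Theory.
Local Open Scope ring_scope.

Section ActionExtrema.
Variables (R : realFieldType) (A : finType).
Implicit Types f g : A -> R.

Lemma minA_le f a : Defs.minA f <= f a.
Proof. by rewrite /Defs.minA; case: pickP => [a0 _|/(_ a)//]; apply: bigmin_le. Qed.

Lemma le_maxA f a : f a <= Defs.maxA f.
Proof. by rewrite /Defs.maxA; case: pickP => [a0 _|/(_ a)//]; apply: le_bigmax. Qed.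

Lemma minA_eq_min f b : (forall a, f b <= f a) -> Defs.minA f = f b.
Proof.
move=> fb_min; apply/eqP; rewrite eq_le minA_le /Defs.minA.
by case: pickP => [a0 _|/(_ b)//]; apply: le_bigmin.
Qed.

Lemma maxA_eq_max f b : (forall a, f a <= f b) -> Defs.maxA f = f b.
Proof.
move=> fb_max; apply/eqP; rewrite eq_le le_maxA andbT /Defs.maxA.
by case: pickP => [a0 _|/(_ b)//]; apply: bigmax_le.
Qed.

Lemma ler_minA f g : (forall a, f a <= g a) -> Defs.minA f <= Defs.minA g.
Proof.
move=> le_fg; rewrite [X in _ <= X]/Defs.minA.
case: pickP => [a0 _|A0]; last by rewrite /Defs.minA; case: pickP => // a; rewrite A0.
by apply: le_bigmin => [|a _]; apply: le_trans (minA_le f _) (le_fg _).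
Qed.

Lemma eq_minA f g : f =1 g -> Defs.minA f = Defs.minA g.
Proof.
by move=> fg; rewrite /Defs.minA; case: pickP => // a0 _; rewrite fg; apply: eq_bigr.
Qed.

End ActionExtrema.

Lemma sum_two_point (R : pzRingType) (A : finType) (b c : A) (x y : R) (F : A -> R) :
  \sum_(a : A) (x * (a == b)%:R + y * (a == c)%:R) * F a = x * F b + y * F c.
Proof.
have sum_delta d : \sum_(a : A) (a == d)%:R * F a = F d.
  by rewrite (bigD1 d) //= eqxx mul1r big1 ?addr0 // => a /negbTE ->; rewrite mul0r.
under eq_bigr do rewrite mulrDl -!mulrA.
by rewrite big_split -!big_distrr /= !sum_delta.
Qed.

Lemma mixture_ge (R : realFieldType) (A : finType) (eta : R) (xi Q : A -> R) a m :
  is_dist xi -> 1 - eta <= xi a -> (forall a', m <= Q a') ->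
  (1 - eta) * Q a + eta * m <= \sum_(a' : A) xi a' * Q a'.
Proof.
move=> [xi_ge0 xi_sum1] xi_a_ge m_lb.
have -> : \sum_(a' : A) xi a' * Q a' = m + \sum_(a' : A) xi a' * (Q a' - m).
  under [X in _ = _ + X]eq_bigr do rewrite mulrBr.
  by rewrite sumrB -big_distrl /= xi_sum1 mul1r addrC subrK.
have excess_ge : xi a * (Q a - m) <= \sum_(a' : A) xi a' * (Q a' - m).
  rewrite (bigD1 a) //= lerDl; apply: sumr_ge0 => b _.
  by rewrite mulr_ge0 ?subr_ge0.
have : (1 - eta) * (Q a - m) <= xi a * (Q a - m) by rewrite ler_wpM2r ?subr_ge0.
lra.
Qed.

Section RobustValue.
Variables (R : realFieldType) (S A : finType).
Implicit Types (M : mdp S A R) (psi : policy S A) (V : S -> R).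

Definition qvalue M h s V a := rew M h s a + \sum_(s' : S) trans M h s a s' * V s'.

Lemma vrecS M psi n h s :
  vrec M psi n.+1 h s = qvalue M h s (vrec M psi n h.+1) (psi h s).
Proof. by []. Qed.

Lemma rdpVS M eta n h s :
  rdpV M eta n.+1 h s = (1 - eta) * Defs.maxA (qvalue M h s (rdpV M eta n h.+1))
                        + eta * Defs.minA (qvalue M h s (rdpV M eta n h.+1)).
Proof. by []. Qed.

Lemma eq_qvalue M h s V1 V2 : V1 =1 V2 -> qvalue M h s V1 =1 qvalue M h s V2.
Proof. by move=> eqV a; rewrite /qvalue; under eq_bigr do rewrite eqV. Qed.

Lemma ler_qvalue M h s V1 V2 a : (forall s', 0 <= trans M h s a s') ->
  (forall s', V1 s' <= V2 s') -> qvalue M h s V1 a <= qvalue M h s V2 a.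
Proof.
move=> trans_ge0 leV; rewrite lerD2l; apply: ler_sum => s' _.
exact: ler_wpM2l.
Qed.

Lemma qvalue_mix M M0 h s a (xi : A -> R) V :
  (forall s', trans M h s a s' = \sum_(a' : A) trans M0 h s a' s' * xi a') ->
  rew M h s a = \sum_(a' : A) rew M0 h s a' * xi a' ->
  qvalue M h s V a = \sum_(a' : A) xi a' * qvalue M0 h s V a'.
Proof.
move=> transE rewE; rewrite /qvalue rewE.
under [X in _ + X = _]eq_bigr do rewrite transE big_distrl /=.
rewrite exchange_big -big_split; apply: eq_bigr => a' _ /=.
rewrite mulrDr big_distrr /= mulrC; congr (_ + _).
by apply: eq_bigr => s' _; ring.
Qed.

Fixpoint robust_vrec M0 eta psi n h s : R :=
  match n with
  | 0 => 0
  | n'.+1 => (1 - eta) * qvalue M0 h s (robust_vrec M0 eta psi n' h.+1) (psi h s)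
             + eta * Defs.minA (qvalue M0 h s (robust_vrec M0 eta psi n' h.+1))
  end.

Definition robust_value M0 eta psi := robust_vrec M0 eta psi (hor M0) 0 (s_init M0).

Section Nominal.
Variables (M0 : mdp S A R) (eta : R).
Hypotheses (M0_valid : valid_mdp M0) (eta_range : 0 <= eta <= 1).

Lemma robust_vrec_le_vrec M psi : perturbation M0 eta M ->
  forall n h s, (h + n = hor M0)%N -> robust_vrec M0 eta psi n h s <= vrec M psi n h s.
Proof.
case=> _ [_ [xi xiP]]; elim=> [//|n IHn] h s hn.
have lt_h : (h < hor M0)%N by rewrite -hn addnS ltnS leq_addr.
have [xi_dist [xi_ge [transE rewE]]] := xiP h lt_h s (psi h s).
rewrite vrecS (qvalue_mix _ transE rewE).
apply: le_trans (mixture_ge xi_dist xi_ge (minA_le _)) _.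
apply: ler_sum => a' _; rewrite ler_wpM2l ?xi_dist.1 //.
apply: ler_qvalue => [s'|s']; first exact: (M0_valid lt_h s a').1.1.
by apply: IHn; rewrite addSnnS.
Qed.

Lemma robust_vrec_le_rdpV psi :
  forall n h s, (h + n = hor M0)%N -> robust_vrec M0 eta psi n h s <= rdpV M0 eta n h s.
Proof.
have /andP[eta_ge0 eta_le1] := eta_range; elim=> [//|n IHn] h s hn.
have lt_h : (h < hor M0)%N by rewrite -hn addnS ltnS leq_addr.
have leQ a : qvalue M0 h s (robust_vrec M0 eta psi n h.+1) a
             <= qvalue M0 h s (rdpV M0 eta n h.+1) a.
  apply: ler_qvalue => [s'|s']; first exact: (M0_valid lt_h s a).1.1.
  by apply: IHn; rewrite addSnnS.
rewrite rdpVS /=; apply: lerD; apply: ler_wpM2l; rewrite ?subr_ge0 //.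
  exact: le_trans (leQ _) (le_maxA _ _).
exact: ler_minA.
Qed.

Lemma robust_vrec_rdp_output rho : rdp_output M0 eta rho ->
  forall n h s, (h + n = hor M0)%N -> robust_vrec M0 eta rho n h s = rdpV M0 eta n h s.
Proof.
move=> rhoP; elim=> [//|n IHn] h s hn.
have lt_h : (h < hor M0)%N by rewrite -hn addnS ltnS leq_addr.
have eqQ : qvalue M0 h s (robust_vrec M0 eta rho n h.+1) =1 qvalue M0 h s (rdpV M0 eta n h.+1).
  by apply: eq_qvalue => s'; apply: IHn; rewrite addSnnS.
rewrite rdpVS /= (eq_minA eqQ) eqQ (@maxA_eq_max _ _ _ (rho h s)) // => a.
by have := rhoP h lt_h s a; rewrite /rdpQ -hn addnS subSS addKn.
Qed.

Definition worst_action psi h s : A :=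
  [arg min_(a < psi h s) qvalue M0 h s (robust_vrec M0 eta psi (hor M0 - h.+1) h.+1) a]%O.

Definition worst_mix psi h s (a a' : A) : R :=
  (1 - eta) * (a' == a)%:R + eta * (a' == worst_action psi h s)%:R.

Definition worst_mdp psi : mdp S A R :=
  MDP (s_init M0) (hor M0)
    (fun h s a s' => \sum_(a' : A) trans M0 h s a' s' * worst_mix psi h s a a')
    (fun h s a => \sum_(a' : A) rew M0 h s a' * worst_mix psi h s a a').

Lemma worst_mdp_perturbation psi : perturbation M0 eta (worst_mdp psi).
Proof.
have /andP[eta_ge0 eta_le1] := eta_range; do 2!split=> //.
exists (worst_mix psi) => h _ s a; do 3?split=> //.
- by move=> a'; rewrite addr_ge0 ?mulr_ge0 ?subr_ge0.
- under eq_bigr do rewrite -[worst_mix _ _ _ _ _]mulr1.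
  by rewrite sum_two_point; ring.
- by rewrite /worst_mix eqxx mulr1 lerDl mulr_ge0.
Qed.

Lemma vrec_worst_mdp psi :
  forall n h s, (h + n = hor M0)%N -> vrec (worst_mdp psi) psi n h s = robust_vrec M0 eta psi n h s.
Proof.
elim=> [//|n IHn] h s hn.
have eqQ : qvalue M0 h s (vrec (worst_mdp psi) psi n h.+1)
           =1 qvalue M0 h s (robust_vrec M0 eta psi n h.+1).
  by apply: eq_qvalue => s'; apply: IHn; rewrite addSnnS.
rewrite vrecS (@qvalue_mix _ M0 _ _ _ (worst_mix psi h s (psi h s))) //.
rewrite sum_two_point !eqQ /=; congr (_ + eta * _); apply/esym/minA_eq_min.
rewrite /worst_action -hn addnS subSS addKn.
by case: arg_minP => // b _ b_min a; apply: b_min.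
Qed.

Lemma robust_value_le_value psi M :
  perturbation M0 eta M -> robust_value M0 eta psi <= value M psi.
Proof.
move=> M_pert; rewrite /value; have [-> [-> _]] := M_pert.
exact: robust_vrec_le_vrec.
Qed.

Lemma value_worst_mdp psi : value (worst_mdp psi) psi = robust_value M0 eta psi.
Proof. exact: vrec_worst_mdp. Qed.

Lemma robust_value_le_rdp_output psi rho : rdp_output M0 eta rho ->
  robust_value M0 eta psi <= robust_value M0 eta rho.
Proof.
move=> rhoP; rewrite /robust_value (robust_vrec_rdp_output rhoP) //.
exact: robust_vrec_le_rdpV.
Qed.

End Nominal.
End RobustValue.

Theorem theorem1 (R : realFieldType) (S A : finType) (M0 : mdp S A R)
    (eta : R) (rho : policy S A) :
  valid_mdp M0 -> deterministic M0 -> 0 <= eta <= 1 ->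
  rdp_output M0 eta rho ->
  exists2 Mstar : mdp S A R, perturbation M0 eta Mstar &
    (forall M, perturbation M0 eta M -> value Mstar rho <= value M rho) /\
    (forall psi : policy S A, exists2 Mpsi : mdp S A R, perturbation M0 eta Mpsi &
       (forall M, perturbation M0 eta M -> value Mpsi psi <= value M psi) /\
       value Mpsi psi <= value Mstar rho).
Proof.
move=> M0_valid _ eta_range rhoP.
exists (worst_mdp M0 eta rho); first exact: worst_mdp_perturbation.
split=> [M M_pert|psi]; first by rewrite value_worst_mdp robust_value_le_value.
exists (worst_mdp M0 eta psi); first exact: worst_mdp_perturbation.
split=> [M M_pert|]; first by rewrite value_worst_mdp robust_value_le_value.
by rewrite !value_worst_mdp robust_value_le_rdp_output.
Qed.
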